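(* Over a field of characteristic $0$, write $[a,b]=ab-ba$ and $\{a,b\}=ab+ba$. An algebra is left-symmetric and satisfies $(ab)c-(ba)c-(ac)b+(ca)b+(bc)a-(cb)a=0$ if and only if, in terms of $[\cdot,\cdot]$ and $\{\cdot,\cdot\}$, it satisfies \[ [[a,b],c]+[[b,c],a]+[[c,a],b]=0, \] \[ \{\{a,b\},c\}=-\{[a,b],c\}-2\{[a,c],b\}+[\{a,b\},c]-[[a,c],b]+\{a,\{b,c\}\}-\{a,[b,c]\}+[a,\{b,c\}], \] and \[ \{[a,b],c\}+\{[b,c],a\}+\{[c,a],b\}=0. \]
   Context: A left-symmetric algebra is an algebra whose associator $(a,b,c)=(ab)c-a(bc)$ satisfies $(a,b,c)=(b,a,c)$. The statement is the polarization (Markl–Remm) of this variety. *)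

From mathcomp Require Import all_boot all_order all_algebra.
Set Implicit Arguments. Unset Strict Implicit. Unset Printing Implicit Defensive.
Import GRing.Theory.
Local Open Scope ring_scope.

Section NonAssoc.
Variables (K : fieldType) (V : lmodType K) (mul : V -> V -> V).

Definition bilinear_mul : Prop :=
  (forall k x y z, mul (k *: x + y) z = k *: mul x z + mul y z) /\
  (forall k x y z, mul z (k *: x + y) = k *: mul z x + mul z y).

Definition associator (a b c : V) : V := mul (mul a b) c - mul a (mul b c).

Definition left_symmetric : Prop :=
  forall a b c, associator a b c = associator b a c.

Definition lbr (a b : V) : V := mul a b - mul b a.
Definition jbr (a b : V) : V := mul a b + mul b a.
End NonAssoc.

From mathcomp Require Import all_boot all_order all_algebra.
From mathcomp Require Import ring.
Import GRing.Theory.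
Set Implicit Arguments. Unset Strict Implicit. Unset Printing Implicit Defensive.
Local Open Scope ring_scope.

(* Everything lives in the span of the twelve degree-three monomials in a, b,
   c.  Expanding the brackets, the three bracket identities are linear
   combinations of the left-symmetry defects d(x,y,z) = (x,y,z) - (y,x,z) and
   of the alternating sum of the (xy)z, and conversely 4 d(a,b,c) and twice
   that alternating sum are combinations of the bracket identities; so the two
   systems are equivalent as soon as 2 is invertible. *)

Section LinearCombination.
Variables (R : comNzRingType) (V : lmodType R).

Definition lincomb (vs : seq V) (p : {poly R}) : V :=
  \sum_(i < size vs) p`_i *: vs`_i.

Lemma lincombD vs p q : lincomb vs (p + q) = lincomb vs p + lincomb vs q.
Proof. by rewrite -big_split; apply: eq_bigr => i _; rewrite coefD scalerDl. Qed.

Lemma lincombN vs p : lincomb vs (- p) = - lincomb vs p.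
Proof. by rewrite -sumrN; apply: eq_bigr => i _; rewrite coefN scaleNr. Qed.

Lemma lincombCM vs a p : lincomb vs (a%:P * p) = a *: lincomb vs p.
Proof. by rewrite scaler_sumr; apply: eq_bigr => i _; rewrite coefCM scalerA. Qed.

Lemma lincombXn vs k : (k < size vs)%N -> lincomb vs 'X^k = vs`_k.
Proof.
move=> lt_k; rewrite /lincomb (bigD1 (Ordinal lt_k)) //= coefXn eqxx scale1r.
rewrite big1 ?addr0 // => i neq_ik; rewrite coefXn.
by move: neq_ik; rewrite -val_eqE /= => /negbTE ->; rewrite scale0r.
Qed.

End LinearCombination.

Section BilinearProduct.
Variables (K : fieldType) (V : lmodType K) (mul : V -> V -> V).
Hypothesis hmul : bilinear_mul mul.

Lemma mulDl x y z : mul (x + y) z = mul x z + mul y z.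
Proof. by have := hmul.1 1 x y z; rewrite !scale1r. Qed.

Lemma mulDr x y z : mul z (x + y) = mul z x + mul z y.
Proof. by have := hmul.2 1 x y z; rewrite !scale1r. Qed.

Lemma mul0l z : mul 0 z = 0.
Proof. by apply: (addrI (mul 0 z)); rewrite -mulDl !addr0. Qed.

Lemma mul0r z : mul z 0 = 0.
Proof. by apply: (addrI (mul z 0)); rewrite -mulDr !addr0. Qed.

Lemma mulNl x z : mul (- x) z = - mul x z.
Proof. by apply/eqP; rewrite -addr_eq0 -mulDl addNr mul0l. Qed.

Lemma mulNr x z : mul z (- x) = - mul z x.
Proof. by apply/eqP; rewrite -addr_eq0 -mulDr addNr mul0r. Qed.

Definition lsym_defect a b c := associator mul a b c - associator mul b a c.

Definition alt_lmul a b c :=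
  mul (mul a b) c - mul (mul b a) c - mul (mul a c) b + mul (mul c a) b
  + mul (mul b c) a - mul (mul c b) a.

Definition lbr_jacobi a b c :=
  lbr mul (lbr mul a b) c + lbr mul (lbr mul b c) a + lbr mul (lbr mul c a) b.

Definition jbr_lbr_cyclic a b c :=
  jbr mul (lbr mul a b) c + jbr mul (lbr mul b c) a + jbr mul (lbr mul c a) b.

Definition jbr_defect a b c :=
  jbr mul (jbr mul a b) c -
  (- jbr mul (lbr mul a b) c - 2%:R *: jbr mul (lbr mul a c) b
   + lbr mul (jbr mul a b) c - lbr mul (lbr mul a c) b
   + jbr mul a (jbr mul b c) - jbr mul a (lbr mul b c)
   + lbr mul a (jbr mul b c)).

(* The k-th monomial is encoded as 'X^k, so that a linear identity between
   monomials becomes a polynomial identity, which [ring] decides. *)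
Ltac reify_monomials ms l k :=
  lazymatch l with
  | ?m :: ?l' =>
      rewrite [m](_ : m = lincomb ms 'X^k); [|by rewrite lincombXn];
      reify_monomials ms l' k.+1
  | [::] => idtac
  end.

Ltac trilinear_identity a b c :=
  rewrite /lsym_defect /alt_lmul /lbr_jacobi /jbr_lbr_cyclic /jbr_defect;
  rewrite /associator /lbr /jbr ?(mulDl, mulDr, mulNl, mulNr);
  let monomials := constr:([:: mul (mul a b) c; mul (mul a c) b; mul (mul b a) c;
    mul (mul b c) a; mul (mul c a) b; mul (mul c b) a; mul a (mul b c);
    mul a (mul c b); mul b (mul a c); mul b (mul c a); mul c (mul a b);
    mul c (mul b a)]) in
  let ms := fresh "ms" in
  pose ms := monomials;
  reify_monomials ms monomials 0%N;
  repeat first [rewrite -lincombD | rewrite -lincombN | rewrite -lincombCM];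
  congr (lincomb ms _); ring.

Lemma lbr_jacobiE a b c :
  lbr_jacobi a b c = lsym_defect a b c - lsym_defect a c b + lsym_defect b c a.
Proof. trilinear_identity a b c. Qed.

Lemma jbr_defectE a b c :
  jbr_defect a b c =
  lsym_defect a b c + 3%:R *: lsym_defect a c b + lsym_defect b c a.
Proof. trilinear_identity a b c. Qed.

Lemma jbr_lbr_cyclicE a b c :
  jbr_lbr_cyclic a b c =
  - lsym_defect a b c + lsym_defect a c b - lsym_defect b c a
  + 2%:R *: alt_lmul a b c.
Proof. trilinear_identity a b c. Qed.

Lemma lsym_defect_brackets a b c :
  4%:R *: lsym_defect a b c = lbr_jacobi a b c + jbr_defect a c b.
Proof. trilinear_identity a b c. Qed.

Lemma alt_lmul_brackets a b c :
  2%:R *: alt_lmul a b c = lbr_jacobi a b c + jbr_lbr_cyclic a b c.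
Proof. trilinear_identity a b c. Qed.

Lemma left_symmetric_alt_iff_brackets (two_neq0 : 2%:R != 0 :> K) :
  left_symmetric mul /\ (forall a b c, alt_lmul a b c = 0) <->
  [/\ forall a b c, lbr_jacobi a b c = 0,
      forall a b c, jbr_defect a b c = 0 &
      forall a b c, jbr_lbr_cyclic a b c = 0].
Proof.
split=> [[lsym alt0] | [jacobi0 jbr0 cyclic0]].
  have defect0 a b c : lsym_defect a b c = 0 by rewrite /lsym_defect lsym subrr.
  split=> a b c;
    by rewrite ?lbr_jacobiE ?jbr_defectE ?jbr_lbr_cyclicE !defect0 ?alt0
               !(scaler0, oppr0, addr0).
have four_neq0 : 4%:R != 0 :> K by rewrite (natrM K 2 2) mulf_neq0.
split=> [a b c | a b c]; apply/eqP.
  have /eqP := lsym_defect_brackets a b c.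
  by rewrite jacobi0 jbr0 addr0 scaler_eq0 (negbTE four_neq0) subr_eq0.
have /eqP := alt_lmul_brackets a b c.
by rewrite jacobi0 cyclic0 addr0 scaler_eq0 (negbTE two_neq0).
Qed.

End BilinearProduct.

Theorem mainTheorem14 (K : fieldType) (charK0 : [pchar K] =i pred0)
    (V : lmodType K) (mul : V -> V -> V) (hmul : bilinear_mul mul) :
  (left_symmetric mul /\
   (forall a b c : V,
      mul (mul a b) c - mul (mul b a) c - mul (mul a c) b + mul (mul c a) b
      + mul (mul b c) a - mul (mul c b) a = 0))
  <->
  ((forall a b c : V,
      lbr mul (lbr mul a b) c + lbr mul (lbr mul b c) a
      + lbr mul (lbr mul c a) b = 0) /\
   (forall a b c : V,
      jbr mul (jbr mul a b) c =
        - jbr mul (lbr mul a b) c - 2%:R *: jbr mul (lbr mul a c) b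
        + lbr mul (jbr mul a b) c - lbr mul (lbr mul a c) b
        + jbr mul a (jbr mul b c) - jbr mul a (lbr mul b c)
        + lbr mul a (jbr mul b c)) /\
   (forall a b c : V,
      jbr mul (lbr mul a b) c + jbr mul (lbr mul b c) a
      + jbr mul (lbr mul c a) b = 0)).
Proof.
have /pcharf0P char0 := charK0.
have two_neq0 : 2%:R != 0 :> K by rewrite char0.
have brackets := left_symmetric_alt_iff_brackets hmul two_neq0.
split=> [/brackets [jacobi0 jbr0 cyclic0] | [jacobi0 [jbr_eq cyclic0]]].
  by split; [|split] => // a b c; apply/subr0_eq/jbr0.
by apply/brackets; split=> // a b c; rewrite /jbr_defect jbr_eq subrr.
Qed.
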